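(* (1) Every symmetric intersecting family is balanceable. (2) There exists a family (of subsets of some finite set) that is uniform and balanceable but not regular (and hence not symmetric). (3) There exists a family that is uniform, regular and intersecting but not balanceable.
   Context: Let $P$ be a finite set with $|P|=n$ (identified with $[n]$). A family $\mathcal{F}=(F_1,\dots,F_m)$ of subsets of $P$ is: intersecting if any two of its sets intersect; regular if every element of $P$ lies in the same number of sets of $\mathcal{F}$; uniform if all its sets have the same size; symmetric if for any $p,q\in P$ there is a bijection $\varphi:P\to P$ with $\varphi(p)=q$ and $\{\varphi(A):A\in\mathcal{F}\}=\mathcal{F}$; balanceable if there exist $w\in[0,1]^m$ with $\sum_i w_i=1$ and $s\in[0,1]^{m\times m\times n}$ with $\sum_p s_{ijp}=1$ for all $i,j$, such that (intersecting system) $s_{ijp}>0$ implies $p\in F_i\cap F_j$ for all $i,j,p$, and (balanced) $\sum_{i=1}^m\sum_{j=1}^m w_iw_js_{ijp}=1/n$ for all $p\in P$. *)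

From HB Require Import structures.
From mathcomp Require Import all_boot all_order all_algebra.
From mathcomp Require Import fingroup perm.
From mathcomp Require Import reals.
Set Implicit Arguments. Unset Strict Implicit. Unset Printing Implicit Defensive.
Import Order.TTheory GRing.Theory Num.Theory.
Local Open Scope ring_scope.

(* A family F = (F_1,...,F_m) of subsets of P = 'I_n is a function 'I_m -> {set 'I_n}
   (repetitions allowed). *)

Definition intersecting n m (F : 'I_m -> {set 'I_n}) : Prop :=
  forall i j : 'I_m, F i :&: F j != set0.

Definition regular n m (F : 'I_m -> {set 'I_n}) : Prop :=
  exists d : nat, forall p : 'I_n, #|[set i : 'I_m | p \in F i]| = d.

Definition uniform n m (F : 'I_m -> {set 'I_n}) : Prop :=
  exists k : nat, forall i : 'I_m, #|F i| = k.

(* {phi(A) : A in F} = F as families (multisets): some permutation sigma of the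
   indices with phi(F_i) = F_(sigma i). *)
Definition symmetric_family n m (F : 'I_m -> {set 'I_n}) : Prop :=
  forall p q : 'I_n, exists phi : {perm 'I_n},
    phi p = q /\ exists sigma : {perm 'I_m}, forall i, phi @: F i = F (sigma i).

Definition balanceable (R : realType) n m (F : 'I_m -> {set 'I_n}) : Prop :=
  exists (w : 'I_m -> R) (s : 'I_m -> 'I_m -> 'I_n -> R),
    [/\ (forall i, 0 <= w i <= 1),
        \sum_(i < m) w i = 1 &
        (forall i j p, 0 <= s i j p <= 1)] /\
    [/\
        (forall i j, \sum_(p < n) s i j p = 1),
        (forall i j p, 0 < s i j p -> p \in F i :&: F j) &
        (forall p : 'I_n,
           \sum_(i < m) \sum_(j < m) w i * w j * s i j p = n%:R^-1)].

(* Part (1): fix any point choice s_ij in F_i :&: F_j and average it over the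
   automorphism group of the family, i.e. the pairs (phi, sigma) of a point and
   an index permutation with phi @: F_i = F_(sigma i).  The load
   p |-> \sum_(i, j) s_ij(p) of the averaged system is invariant under the group,
   which symmetry makes transitive on points; so the load is constant, and as it
   sums to m ^ 2 the uniform weights 1/m balance the family.
   Part (3): all the mass |T|/n of a set T of points is carried by pairs (i, j)
   of sets meeting T, so if every set meeting T lies in I then |T|/n is at most
   (\sum_(i in I) w_i) ^ 2.  In F3 the points 0, 1, 2 lie only in the first two
   sets and 3, 4, 5 only in the last two, so both halves of the total weight 1
   would exceed 1/2. *)

From mathcomp Require Import all_boot all_order all_algebra.
From mathcomp Require Import fingroup perm gproduct.
From mathcomp Require Import reals.
From mathcomp Require Import lra.

Set Implicit Arguments. Unset Strict Implicit. Unset Printing Implicit Defensive.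
Import Order.TTheory GRing.Theory Num.Theory.
Local Open Scope ring_scope.

Section IntersectingSystems.
Variables (R : realType) (n m : nat) (F : 'I_m -> {set 'I_n}).

Definition intersecting_system (s : 'I_m -> 'I_m -> 'I_n -> R) :=
  [/\ forall i j p, 0 <= s i j p, forall i j, \sum_p s i j p = 1 &
      forall i j p, 0 < s i j p -> p \in F i :&: F j].

Definition load (w : 'I_m -> R) (s : 'I_m -> 'I_m -> 'I_n -> R) (p : 'I_n) :=
  \sum_i \sum_j w i * w j * s i j p.

Lemma summand_le1 (I : finType) (f : I -> R) (x : I) :
  (forall y, 0 <= f y) -> \sum_y f y = 1 -> f x <= 1.
Proof.
move=> f_ge0 <-; rewrite (bigD1 x) //= lerDl.
by apply: sumr_ge0 => y _; apply: f_ge0.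
Qed.

Lemma balanceable_intro w s :
  (forall i, 0 <= w i) -> \sum_i w i = 1 -> intersecting_system s ->
  (forall p, load w s p = n%:R^-1) -> balanceable R F.
Proof.
move=> w_ge0 w_sum [s_ge0 s_sum s_supp] bal.
exists w, s; split; split => //.
- by move=> i; rewrite w_ge0 (summand_le1 _ w_ge0).
- by move=> i j p; rewrite s_ge0 (summand_le1 _ (s_ge0 i j)).
Qed.

Lemma sum_load w s : intersecting_system s ->
  \sum_p load w s p = (\sum_i w i) ^+ 2.
Proof.
case=> _ s_sum _; rewrite expr2 big_distrlr /= exchange_big /=.
apply: eq_bigr => i _; rewrite exchange_big /=; apply: eq_bigr => j _.
by rewrite -mulr_sumr s_sum mulr1.
Qed.

Lemma balanceable_const_load s : (0 < m)%N -> intersecting_system s ->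
  (forall p q, load (fun=> m%:R^-1) s p = load (fun=> m%:R^-1) s q) ->
  balanceable R F.
Proof.
move=> m_gt0 s_sys load_const.
have w_sum : \sum_(i < m) m%:R^-1 = 1 :> R.
  by rewrite sumr_const card_ord -[LHS]mulr_natl mulfV // pnatr_eq0 -lt0n.
apply: (balanceable_intro _ w_sum s_sys) => [i|p]; first by rewrite invr_ge0.
have := sum_load (fun=> m%:R^-1) s_sys.
rewrite w_sum expr1n (eq_bigr _ (fun q _ => load_const q p)) sumr_const card_ord.
have n_neq0 : n%:R != 0 :> R by rewrite pnatr_eq0 -lt0n (leq_ltn_trans _ (ltn_ord p)).
by move=> load_n; apply: (mulfI n_neq0); rewrite mulfV // mulr_natl.
Qed.

End IntersectingSystems.

Lemma sum_perm (V : nmodType) (T : finType) (phi : {perm T}) (f : T -> V) :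
  \sum_x f (phi x) = \sum_x f x.
Proof. by rewrite [RHS](reindex_inj (@perm_inj _ phi)). Qed.

Section FamilyAutomorphisms.
Variables (n m : nat) (F : 'I_m -> {set 'I_n}).

Definition family_aut : {set {perm 'I_n} * {perm 'I_m}} :=
  [set a : {perm 'I_n} * {perm 'I_m} | [forall i, a.1 @: F i == F (a.2 i)]].

Lemma family_autP (a : {perm 'I_n} * {perm 'I_m}) :
  reflect (forall i, a.1 @: F i = F (a.2 i)) (a \in family_aut).
Proof. by rewrite inE; apply: (iffP forallP) => autF i; apply/eqP. Qed.

Lemma family_aut_group_set : group_set family_aut.
Proof.
apply/group_setP; split.
  apply/family_autP => i /=; rewrite perm1 -[RHS]imset_id.
  by apply: eq_imset => x; rewrite perm1.
move=> a b /family_autP autFa /family_autP autFb; apply/family_autP => i /=.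
rewrite permM -autFb -autFa -imset_comp; apply: eq_imset => x.
by rewrite /= permM.
Qed.

Canonical family_aut_group := group family_aut_group_set.

Lemma symmetric_family_aut_transitive : symmetric_family F ->
  forall p q, exists2 a, a \in family_aut & a.1 p = q.
Proof.
move=> symF p q; have [phi [phi_pq [sigma autF]]] := symF p q.
by exists (phi, sigma) => //; apply/family_autP.
Qed.

Lemma family_autI (a : {perm 'I_n} * {perm 'I_m}) i j : a \in family_aut ->
  a.1 @: (F i :&: F j) = F (a.2 i) :&: F (a.2 j).
Proof.
by move/family_autP=> autF; rewrite imsetI ?autF // => x y _ _; apply: perm_inj.
Qed.

End FamilyAutomorphisms.

Section Symmetrization.
Variables (R : realType) (n m : nat) (F : 'I_m -> {set 'I_n}).
Variable s : 'I_m -> 'I_m -> 'I_n -> R.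

Local Notation A := (family_aut F).

Definition symmetrize i j p : R :=
  #|A|%:R^-1 * \sum_(a in A) s (a.2 i) (a.2 j) (a.1 p).

Lemma card_family_aut_neq0 : #|A|%:R != 0 :> R.
Proof. by rewrite pnatr_eq0 -lt0n; apply/card_gt0P; exists 1%g; apply: group1. Qed.

Lemma intersecting_system_symmetrize :
  intersecting_system F s -> intersecting_system F symmetrize.
Proof.
case=> s_ge0 s_sum s_supp; split => [i j p|i j|i j p].
- by rewrite mulr_ge0 ?invr_ge0 // sumr_ge0.
- rewrite -mulr_sumr exchange_big /=.
  under eq_bigr => a _ do rewrite sum_perm s_sum.
  by rewrite sumr_const mulVf ?card_family_aut_neq0.
- apply: contraTT => p_notin; rewrite /symmetrize big1 ?mulr0 ?ltxx // => a autFa.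
  apply/eqP; rewrite eq_le s_ge0 andbT leNgt; apply: contra p_notin => /s_supp.
  by rewrite -family_autI // mem_imset //; apply: perm_inj.
Qed.

Lemma load_symmetrize (c : R) p :
  load (fun=> c) symmetrize p = #|A|%:R^-1 * \sum_(a in A) load (fun=> c) s (a.1 p).
Proof.
have -> : \sum_(a in A) load (fun=> c) s (a.1 p) =
          \sum_(a in A) \sum_i \sum_j c * c * s (a.2 i) (a.2 j) (a.1 p).
  apply: eq_bigr => a _; rewrite /load -(sum_perm a.2); apply: eq_bigr => i _.
  by rewrite -(sum_perm a.2).
rewrite exchange_big mulr_sumr /load; apply: eq_bigr => i _.
rewrite exchange_big mulr_sumr; apply: eq_bigr => j _.
by rewrite /symmetrize mulrCA -!mulr_sumr.
Qed.

Lemma load_symmetrize_const (c : R) : symmetric_family F ->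
  forall p q, load (fun=> c) symmetrize p = load (fun=> c) symmetrize q.
Proof.
move=> symF p q; have [b autFb <-] := symmetric_family_aut_transitive symF q p.
rewrite !load_symmetrize [in RHS](reindex_inj (mulgI b)) /=.
by congr (_ * _); apply: eq_big => [a|a _]; rewrite ?groupMl // permM.
Qed.

End Symmetrization.

Section ChoiceSystem.
Variables (R : realType) (n m : nat) (F : 'I_m -> {set 'I_n}).

Definition choice_system i j p : R := ([pick x in F i :&: F j] == Some p)%:R.

Lemma intersecting_system_choice :
  intersecting F -> intersecting_system F choice_system.
Proof.
rewrite /choice_system => interF; split => [i j p|i j|i j p] //.
- case: pickP => [x _|none]; last by case/set0Pn: (interF i j) => x; rewrite none.
  rewrite (bigD1 x) //= eqxx big1 ?addr0 // => p.
  by rewrite (inj_eq Some_inj) eq_sym => /negbTE ->.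
- case: pickP => [x Fx|_]; last by rewrite ltxx.
  by case: eqP => [[<-] //|]; rewrite ltxx.
Qed.

End ChoiceSystem.

Lemma symmetric_intersecting_balanceable (R : realType) n m
    (F : 'I_m -> {set 'I_n}) :
  (0 < m)%N -> symmetric_family F -> intersecting F -> balanceable R F.
Proof.
move=> m_gt0 symF interF.
apply: (balanceable_const_load (s := symmetrize F (choice_system R F))) => //.
  exact/intersecting_system_symmetrize/intersecting_system_choice.
exact: load_symmetrize_const.
Qed.

Lemma symmetric_family_regular n m (F : 'I_m -> {set 'I_n}) :
  symmetric_family F -> regular F.
Proof.
case: n F => [|n] F symF; first by exists 0%N => -[].
exists #|[set i | ord0 \in F i]| => p.
have [phi [phi_p [sigma autF]]] := symF p ord0.
rewrite -(card_imset _ (@perm_inj _ sigma)); apply: eq_card => i.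
rewrite -[i](permKV sigma) mem_imset ?inE; last exact: perm_inj.
by rewrite -autF -phi_p mem_imset //; apply: perm_inj.
Qed.

Lemma mass_bound (R : realType) n m (F : 'I_m -> {set 'I_n}) w s
    (T : {set 'I_n}) (I : {set 'I_m}) :
  (forall i, 0 <= w i) -> intersecting_system F s ->
  (forall p, load w s p = n%:R^-1) ->
  (forall p i, p \in T -> p \in F i -> i \in I) ->
  #|T|%:R / n%:R <= (\sum_(i in I) w i) ^+ 2 :> R.
Proof.
move=> w_ge0 [s_ge0 s_sum s_supp] bal TI.
pose t i j := \sum_(p in T) s i j p.
have t_ge0 i j : 0 <= t i j by apply: sumr_ge0.
have t_le1 i j : t i j <= 1.
  rewrite -(s_sum i j) [leRHS](bigID (mem T)) /= lerDl.
  by apply: sumr_ge0.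
have t0 i j : ~~ ((i \in I) && (j \in I)) -> t i j = 0.
  move=> notIij; apply: big1 => p pT; apply/eqP; rewrite eq_le s_ge0 andbT leNgt.
  apply: contra notIij => /s_supp; rewrite inE.
  by case/andP=> /(TI _ _ pT) -> /(TI _ _ pT).
have -> : #|T|%:R / n%:R = \sum_(p in T) load w s p.
  by rewrite (eq_bigr _ (fun p _ => bal p)) sumr_const mulr_natl.
have -> : \sum_(p in T) load w s p = \sum_i \sum_j w i * w j * t i j.
  rewrite exchange_big /=; apply: eq_bigr => i _.
  by rewrite exchange_big /=; apply: eq_bigr => j _; rewrite mulr_sumr.
rewrite expr2 big_distrlr /= [leRHS]big_mkcond /=; apply: ler_sum => i _.
case: ifP => Ii; last by rewrite big1 // => j _; rewrite t0 ?Ii ?mulr0.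
rewrite [leRHS]big_mkcond /=; apply: ler_sum => j _.
case: ifP => Ij; last by rewrite t0 ?Ij ?andbF ?mulr0.
by rewrite ler_piMr ?mulr_ge0.
Qed.

Lemma card_ord_set n (P : pred nat) : #|[set p : 'I_n | P p]| = count P (iota 0 n).
Proof.
by rewrite -sum1dep_card -(big_mkord P (fun=> 1%N)) sum1_count /index_iota subn0.
Qed.

Lemma mem_iota_ord k (x : 'I_k) : val x \in iota 0 k.
Proof. by rewrite mem_iota ltn_ord. Qed.

Section SeqFamily.
Variables (n m : nat) (S : seq (seq nat)).

Definition seq_family (i : 'I_m) : {set 'I_n} :=
  [set p : 'I_n | val p \in nth [::] S i].

Lemma card_seq_familyI i j :
  #|seq_family i :&: seq_family j| =
  count (fun p => (p \in nth [::] S i) && (p \in nth [::] S j)) (iota 0 n).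
Proof. by rewrite -card_ord_set; apply: eq_card => p; rewrite !inE. Qed.

Lemma card_seq_family_degree (p : 'I_n) :
  #|[set i | p \in seq_family i]| = count (fun i => val p \in nth [::] S i) (iota 0 m).
Proof. by rewrite -card_ord_set; apply: eq_card => i; rewrite !inE. Qed.

Lemma seq_family_uniform k :
  all (fun i => count (mem (nth [::] S i)) (iota 0 n) == k) (iota 0 m) ->
  uniform seq_family.
Proof.
move/allP=> card_k; exists k => i; rewrite card_ord_set.
by apply/eqP/card_k; rewrite mem_iota_ord.
Qed.

Lemma seq_family_regular d :
  all (fun p => count (fun i => p \in nth [::] S i) (iota 0 m) == d) (iota 0 n) ->
  regular seq_family.
Proof.
move/allP=> deg_d; exists d => p; rewrite card_seq_family_degree.
by apply/eqP/deg_d; rewrite mem_iota_ord.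
Qed.

Lemma seq_family_intersecting :
  all (fun i => all (fun j =>
    has (fun p => (p \in nth [::] S i) && (p \in nth [::] S j)) (iota 0 n))
  (iota 0 m)) (iota 0 m) ->
  intersecting seq_family.
Proof.
move/allP=> meet i j; have /allP/(_ j (mem_iota_ord j))/hasP[p] :=
  meet i (mem_iota_ord i).
rewrite mem_iota => /andP[_ p_lt_n] Sij.
by apply/set0Pn; exists (Ordinal p_lt_n); rewrite !inE.
Qed.

End SeqFamily.

Section UniformSystem.
Variables (R : realType) (n m : nat) (F : 'I_m -> {set 'I_n}).

Definition uniform_system i j p : R :=
  if p \in F i :&: F j then #|F i :&: F j|%:R^-1 else 0.

Lemma intersecting_system_uniform :
  intersecting F -> intersecting_system F uniform_system.
Proof.
rewrite /uniform_system => interF; split => [i j p|i j|i j p].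
- by case: ifP; rewrite ?invr_ge0.
- rewrite -big_mkcond sumr_const -[LHS]mulr_natr mulVf // pnatr_eq0 -lt0n.
  by rewrite card_gt0 interF.
- by case: ifP => // _; rewrite ltxx.
Qed.
End UniformSystem.

Definition F2 : 'I_4 -> {set 'I_3} :=
  seq_family 3 [:: [:: 0; 1]; [:: 0; 2]; [:: 1; 2]; [:: 0; 1]].

Lemma F2_uniform : uniform F2.
Proof. by apply: (seq_family_uniform (k := 2)). Qed.

Lemma F2_intersecting : intersecting F2.
Proof. by apply: seq_family_intersecting. Qed.

Lemma F2_not_regular : ~ regular F2.
Proof.
case=> d deg; have := deg (@Ordinal 3 2 isT).
by rewrite -(deg ord0) !card_seq_family_degree.
Qed.

(* F2 is the triangle of 2-subsets of {0, 1, 2} with {0, 1} listed twice;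
   splitting the weight 1/3 of {0, 1} between its two copies gives w. *)
Lemma F2_balanceable (R : realType) : balanceable R F2.
Proof.
pose w (i : 'I_4) : R := (if val i \in [:: 1; 2]%N then 2 else 1) / 6.
apply: (balanceable_intro (w := w) (s := uniform_system R F2)).
- by move=> i; rewrite divr_ge0 //; case: ifP.
- by rewrite !big_ord_recr big_ord0 /w /=; lra.
- exact/intersecting_system_uniform/F2_intersecting.
move=> p; rewrite /load !big_ord_recr !big_ord0 /uniform_system /w /=.
rewrite !card_seq_familyI !inE /=.
by case: p => [[|[|[|]]] ?] //=; rewrite ?(addn0, add0n, addn1); lra.
Qed.

Definition F3 : 'I_4 -> {set 'I_10} :=
  seq_family 10 [:: [:: 0; 1; 2; 6; 7]; [:: 0; 1; 2; 8; 9];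
                    [:: 3; 4; 5; 6; 8]; [:: 3; 4; 5; 7; 9]].

Lemma F3_uniform : uniform F3.
Proof. by apply: (seq_family_uniform (k := 5)). Qed.

Lemma F3_regular : regular F3.
Proof. by apply: (seq_family_regular (d := 2)). Qed.

Lemma F3_intersecting : intersecting F3.
Proof. by apply: seq_family_intersecting. Qed.

Lemma F3_not_balanceable (R : realType) : ~ balanceable R F3.
Proof.
case=> w [s [[w01 w_sum s01] [s_sum s_supp bal]]].
have w_ge0 i : 0 <= w i by case/andP: (w01 i).
have s_sys : intersecting_system F3 s by split=> // i j p; case/andP: (s01 i j p).
pose I := [set i : 'I_4 | (i < 2)%N].
have weight_gt_half (T : {set 'I_10}) (J : {set 'I_4}) : #|T| = 3%N ->
    (forall p i, p \in T -> p \in F3 i -> i \in J) -> 1 / 2 < \sum_(i in J) w i.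
  move=> card_T TJ; have := mass_bound w_ge0 s_sys bal TJ; rewrite card_T.
  have : 0 <= \sum_(i in J) w i by apply: sumr_ge0.
  by nra.
have lowI : 1 / 2 < \sum_(i in I) w i.
  apply: (weight_gt_half [set p : 'I_10 | val p \in [:: 0; 1; 2]%N]).
    by rewrite card_ord_set.
  move=> [p p_lt] [i i_lt]; rewrite !inE /=.
  by case: i i_lt => [|[|[|[|i]]]] //= _; case: p p_lt => [|[|[|p]]].
have highI : 1 / 2 < \sum_(i in ~: I) w i.
  apply: (weight_gt_half [set p : 'I_10 | val p \in [:: 3; 4; 5]%N]).
    by rewrite card_ord_set.
  move=> [p p_lt] [i i_lt]; rewrite !inE /=.
  by case: i i_lt => [|[|[|[|i]]]] //= _; case: p p_lt => [|[|[|[|[|[|p]]]]]].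
have w_split : \sum_(i in I) w i + \sum_(i in ~: I) w i = 1.
  rewrite -w_sum [RHS](bigID (mem I)); congr (_ + _).
  by apply: eq_bigl => i; rewrite inE.
by lra.
Qed.

Theorem theorem5 (R : realType) :
  (forall (n m : nat) (F : 'I_m -> {set 'I_n}),
      (0 < m)%N -> symmetric_family F -> intersecting F -> balanceable R F)
  /\
  (exists (n m : nat) (F : 'I_m -> {set 'I_n}),
      (0 < m)%N /\ uniform F /\ balanceable R F /\ ~ regular F /\ ~ symmetric_family F)
  /\
  (exists (n m : nat) (F : 'I_m -> {set 'I_n}),
      (0 < m)%N /\ uniform F /\ regular F /\ intersecting F /\ ~ balanceable R F).
Proof.
split; [exact: symmetric_intersecting_balanceable | split].
- exists 3%N, 4%N, F2.
  split=> //; split; first exact: F2_uniform.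
  split; first exact: F2_balanceable.
  by split=> [|/symmetric_family_regular]; apply: F2_not_regular.
- exists 10%N, 4%N, F3.
  split=> //; split; first exact: F3_uniform.
  split; first exact: F3_regular.
  split; [exact: F3_intersecting | exact: F3_not_balanceable].
Qed.
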